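(* (i) Let $E$ be a finite set and $\xi\mapsto A(\xi)$, $\xi\in\mathbb R$, a $C^1$ family of complex square matrices indexed by $E\times E$. Assume there is an invertible matrix $U$ such that $\widetilde A(\xi):=A(\xi)U$ is self-adjoint for all $\xi$ and $\partial_\xi\widetilde A(\xi)\geq\beta I$ for some $\beta>0$. Then for every $\alpha>0$, $$\big|\{\xi\in\mathbb R:\|A^{-1}(\xi)\|_0\geq\alpha^{-1}\}\big|\leq2|E|\alpha\beta^{-1}\|U\|_0.$$ (ii) In particular, if $A(\xi)=Z+\xi W$ with $Z,W$ self-adjoint, $W$ invertible and $\beta_1I\leq Z\leq\beta_2I$ with $\beta_1>0$, then for every $\alpha>0$ $$\big|\{\xi\in\mathbb R:\|A^{-1}(\xi)\|_0\geq\alpha^{-1}\}\big|\leq2|E|\alpha\beta_2\beta_1^{-1}\|W^{-1}\|_0.$$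
   Context: $\|\cdot\|_0$ is the operator norm on $\mathbb C^E$ with its Euclidean norm; $\|A^{-1}(\xi)\|_0:=+\infty$ if $A(\xi)$ is not invertible; $|E|$ is the cardinality of $E$; $|\cdot|$ of a subset of $\mathbb R$ is its Lebesgue measure. *)

From HB Require Import structures.
From mathcomp Require Import all_boot all_order all_algebra.
From mathcomp Require Import all_classical all_reals all_analysis.
From mathcomp.real_closed Require Import complex.
Set Implicit Arguments. Unset Strict Implicit. Unset Printing Implicit Defensive.
Import Order.TTheory GRing.Theory Num.Theory.
Import numFieldNormedType.Exports.
Local Open Scope ring_scope.
Local Open Scope classical_set_scope.

(* Complex numbers are R[i] = complex R for R : realType.
   The finite set E is represented by 'I_n (so |E| = n). *)

Section Defs.
Variable R : realType.
Local Notation C := (complex R).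

Definition adjmx m p (M : 'M[C]_(m, p)) : 'M[C]_(p, m) :=
  \matrix_(i, j) conjc (M j i).

Definition selfadj n (M : 'M[C]_n) : Prop := adjmx M = M.

(* Loewner order: M >= 0 iff v^* M v >= 0 (nonnegative real) for all v *)
Definition psd n (M : 'M[C]_n) : Prop :=
  forall v : 'cV[C]_n, 0 <= (adjmx v *m M *m v) 0 0.

Definition loewner_le n (M1 M2 : 'M[C]_n) : Prop := psd (M2 - M1).

Definition rC (x : R) : C := Complex x 0.

Definition vnorm n (v : 'cV[C]_n) : R :=
  Num.sqrt (\sum_i (Normc.normc (v i 0)) ^+ 2).

Definition opnorm n (M : 'M[C]_n) : R :=
  sup [set vnorm (M *m v) | v in [set v : 'cV[C]_n | vnorm v = 1]].

Definition opnorm_inv n (M : 'M[C]_n) : \bar R :=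
  if M \in unitmx then (opnorm (invmx M))%:E else +oo%E.

Definition reF n (F : R -> 'M[C]_n) (i j : 'I_n) : R -> R :=
  fun t => complex.Re (F t i j).
Definition imF n (F : R -> 'M[C]_n) (i j : 'I_n) : R -> R :=
  fun t => complex.Im (F t i j).

Definition C1_family n (F : R -> 'M[C]_n) : Prop :=
  forall i j : 'I_n,
    (forall x, derivable (reF F i j) x 1) /\ continuous (fun x : R => (reF F i j)^`() x) /\
    (forall x, derivable (imF F i j) x 1) /\ continuous (fun x : R => (imF F i j)^`() x).

Definition deriv_mx n (F : R -> 'M[C]_n) (x : R) : 'M[C]_n :=
  \matrix_(i, j) Complex ((reF F i j)^`() x) ((imF F i j)^`() x).

Definition bad_set n (A : R -> 'M[C]_n) (alpha : R) : set R :=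
  [set xi | ((alpha^-1)%:E <= opnorm_inv (A xi))%E].

End Defs.

(* Put H(xi) = A(xi) U.  It is Hermitian with H' >= beta, so along the real
   line every quadratic form v^* H v increases at rate at least beta |v|^2 and
   the eigenvalues of H move up at speed at least beta.  Since
   A^-1 = U H^-1, the condition ||A^-1(xi)|| >= 1/alpha forces H(xi) to have an
   eigenvalue in [-c, c] with c = alpha ||U||.  Classify such xi by the number
   k in {1, ..., |E|} of eigenvalues <= c: for a fixed k, fewer than k
   eigenvalues lie below -c, and two such parameters are at most 2c/beta
   apart.  Summing over k gives 2 |E| c / beta.
   Part (ii) is part (i) with U = W^-1 Z: then H(xi) = Z W^-1 Z + xi Z,
   H' = Z >= beta1 and ||U|| <= beta2 ||W^-1||. *)

From HB Require Import structures.
From mathcomp Require Import all_boot all_order all_algebra.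
From mathcomp Require Import all_classical all_reals all_analysis.
From mathcomp.real_closed Require Import complex.
From mathcomp Require Import ring lra zify.
Import Order.TTheory GRing.Theory Num.Theory.
Import numFieldNormedType.Exports.
Local Open Scope ring_scope.
Set Implicit Arguments. Unset Strict Implicit. Unset Printing Implicit Defensive.

Section Hermitian.
Variable R : realType.
Local Notation C := (complex R).

Lemma adjmxE m p (M : 'M[C]_(m, p)) : adjmx M = map_mx Num.conj M^T.
Proof. by apply/matrixP => i j; rewrite !mxE. Qed.

Lemma adjmxM m p q (A : 'M[C]_(m, p)) (B : 'M[C]_(p, q)) :
  adjmx (A *m B) = adjmx B *m adjmx A.
Proof. by rewrite !adjmxE trmx_mul map_mxM. Qed.

Lemma adjmxK m p (A : 'M[C]_(m, p)) : adjmx (adjmx A) = A.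
Proof. by apply/matrixP => i j; rewrite !mxE conjcK. Qed.

Lemma adjmxD m p (A B : 'M[C]_(m, p)) : adjmx (A + B) = adjmx A + adjmx B.
Proof. by apply/matrixP => i j; rewrite !mxE rmorphD. Qed.

Lemma adjmx1 m : adjmx (1%:M : 'M[C]_m) = 1%:M.
Proof. by apply/matrixP => i j; rewrite !mxE eq_sym rmorph_nat. Qed.

Lemma adjmxZ_real m p (a : R) (M : 'M[C]_(m, p)) : adjmx (rC a *: M) = rC a *: adjmx M.
Proof. by apply/matrixP => i j; rewrite !mxE rmorphM /= /rC /= oppr0. Qed.

Lemma rCM (a b : R) : rC a * rC b = rC (a * b).
Proof. by rewrite /rC /=; congr Complex; ring. Qed.

Definition cnorm2 (z : C) : R := complex.Re z ^+ 2 + complex.Im z ^+ 2.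

Definition vnorm2 m (v : 'cV[C]_m) : R := \sum_i cnorm2 (v i 0).

Definition qform m (H : 'M[C]_m) (v : 'cV[C]_m) : R :=
  complex.Re ((adjmx v *m H *m v) 0 0).

Definition unitary_diag m (H Q : 'M[C]_m) (d : 'I_m -> R) :=
  [/\ adjmx Q *m Q = 1%:M, Q *m adjmx Q = 1%:M &
      H = Q *m diag_mx (\row_i rC (d i)) *m adjmx Q].

Lemma cnorm2_ge0 z : 0 <= cnorm2 z.
Proof. by rewrite /cnorm2 addr_ge0 // sqr_ge0. Qed.

Lemma cnorm2_eq0 z : (cnorm2 z == 0) = (z == 0).
Proof.
by case: z => a b; rewrite /cnorm2 /= paddr_eq0 ?sqr_ge0 // !sqrf_eq0 eq_complex.
Qed.

Lemma cnorm2_rCM (r : R) (z : C) : cnorm2 (rC r * z) = r ^+ 2 * cnorm2 z.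
Proof. by case: z => a b; rewrite /cnorm2 /rC /=; ring. Qed.

Lemma Re_conj_rC_mul (r : R) (z : C) : complex.Re (conjc z * rC r * z) = r * cnorm2 z.
Proof. by case: z => a b; rewrite /cnorm2 /rC /=; ring. Qed.

Lemma ler_sum_cnorm2 m (f g : 'I_m -> R) (w : 'cV[C]_m) :
  (forall i, w i 0 != 0 -> f i <= g i) ->
  \sum_i f i * cnorm2 (w i 0) <= \sum_i g i * cnorm2 (w i 0).
Proof.
move=> fg; apply: ler_sum => i _; have [->|wi0] := eqVneq (w i 0) 0.
  by rewrite (_ : cnorm2 0 = 0) ?mulr0 //; apply/eqP; rewrite cnorm2_eq0.
by rewrite ler_wpM2r ?cnorm2_ge0 ?fg.
Qed.

Lemma vnorm2E m (v : 'cV[C]_m) : vnorm2 v = complex.Re ((adjmx v *m v) 0 0).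
Proof.
rewrite /vnorm2 !mxE raddf_sum; apply: eq_bigr => i _; rewrite !mxE.
by case: (v i 0) => a b; rewrite /cnorm2 /=; ring.
Qed.

Lemma vnorm2_ge0 m (v : 'cV[C]_m) : 0 <= vnorm2 v.
Proof. by rewrite sumr_ge0 // => i _; apply: cnorm2_ge0. Qed.

Lemma vnorm2_eq0 m (v : 'cV[C]_m) : (vnorm2 v == 0) = (v == 0).
Proof.
rewrite /vnorm2 psumr_eq0; last by move=> i _; apply: cnorm2_ge0.
apply/allP/eqP => [v0|->]; last by move=> i _ /=; rewrite mxE cnorm2_eq0.
apply/matrixP => i j; rewrite ord1 mxE; apply/eqP; rewrite -cnorm2_eq0.
exact: v0 (mem_index_enum _).
Qed.

Lemma vnorm2_gt0 m (v : 'cV[C]_m) : v != 0 -> 0 < vnorm2 v.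
Proof. by move=> v0; rewrite lt_def vnorm2_ge0 vnorm2_eq0 v0. Qed.

Lemma vnorm2Z m (a : R) (v : 'cV[C]_m) : vnorm2 (rC a *: v) = a ^+ 2 * vnorm2 v.
Proof. by rewrite /vnorm2 mulr_sumr; apply: eq_bigr => i _; rewrite mxE cnorm2_rCM. Qed.

Lemma vnormE m (v : 'cV[C]_m) : vnorm v = Num.sqrt (vnorm2 v).
Proof.
congr Num.sqrt; apply: eq_bigr => i _.
by case: (v i 0) => a b; rewrite /cnorm2 /= sqr_sqrtr // addr_ge0 // sqr_ge0.
Qed.

Lemma vnorm_eq1 m (v : 'cV[C]_m) : vnorm v = 1 -> vnorm2 v = 1.
Proof. by rewrite vnormE => v1; rewrite -(sqr_sqrtr (vnorm2_ge0 v)) v1 expr1n. Qed.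

Lemma vnorm2_isometry m (Q : 'M[C]_m) (w : 'cV[C]_m) :
  adjmx Q *m Q = 1%:M -> vnorm2 (Q *m w) = vnorm2 w.
Proof. by move=> QQ; rewrite !vnorm2E adjmxM mulmxA -(mulmxA (adjmx w)) QQ mulmx1. Qed.

Lemma vnorm2_coord m (Q : 'M[C]_m) (v : 'cV[C]_m) : Q *m adjmx Q = 1%:M ->
  vnorm2 v = \sum_i cnorm2 ((adjmx Q *m v) i 0).
Proof. by move=> QQ; rewrite -[LHS](@vnorm2_isometry _ (adjmx Q)) ?adjmxK. Qed.

Lemma qform_unitary_diag m (H Q : 'M[C]_m) d (v : 'cV[C]_m) : unitary_diag H Q d ->
  qform H v = \sum_i d i * cnorm2 ((adjmx Q *m v) i 0).
Proof.
case=> _ _ ->; rewrite /qform; set w := adjmx Q *m v.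
have -> : adjmx v *m (Q *m diag_mx (\row_i rC (d i)) *m adjmx Q) *m v
         = adjmx w *m diag_mx (\row_i rC (d i)) *m w.
  by rewrite /w adjmxM adjmxK !mulmxA.
rewrite mul_mx_diag !mxE raddf_sum; apply: eq_bigr => i _; rewrite !mxE.
exact: Re_conj_rC_mul.
Qed.

Lemma vnorm2_unitary_diag m (H Q : 'M[C]_m) d (v : 'cV[C]_m) : unitary_diag H Q d ->
  vnorm2 (H *m v) = \sum_i d i ^+ 2 * cnorm2 ((adjmx Q *m v) i 0).
Proof.
case=> QQ _ ->; rewrite -!mulmxA vnorm2_isometry //.
by apply: eq_bigr => i _; rewrite mul_diag_mx !mxE cnorm2_rCM.
Qed.

Lemma vnorm2_mul_le m (H Q : 'M[C]_m) d (v : 'cV[C]_m) K :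
  unitary_diag H Q d -> (forall i, d i ^+ 2 <= K) -> vnorm2 (H *m v) <= K * vnorm2 v.
Proof.
move=> HD dK; have [_ QQ _] := HD.
rewrite (vnorm2_unitary_diag v HD) (vnorm2_coord v QQ) mulr_sumr.
by apply: ler_sum_cnorm2 => i _; apply: dK.
Qed.

Lemma qform_le_on m (H Q : 'M[C]_m) d (v : 'cV[C]_m) (A : {set 'I_m}) c :
  unitary_diag H Q d -> (forall i, i \in A -> d i <= c) ->
  (forall i, i \notin A -> (adjmx Q *m v) i 0 = 0) -> qform H v <= c * vnorm2 v.
Proof.
move=> HD dc vA; have [_ QQ _] := HD.
rewrite (qform_unitary_diag v HD) (vnorm2_coord v QQ) mulr_sumr.
apply: ler_sum_cnorm2 => i vi; apply: dc; apply: contraNT vi => /vA ->; exact: eqxx.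
Qed.

Lemma qform_ge_on m (H Q : 'M[C]_m) d (v : 'cV[C]_m) (A : {set 'I_m}) c :
  unitary_diag H Q d -> (forall i, i \in A -> c <= d i) ->
  (forall i, i \notin A -> (adjmx Q *m v) i 0 = 0) -> c * vnorm2 v <= qform H v.
Proof.
move=> HD cd vA; have [_ QQ _] := HD.
rewrite (qform_unitary_diag v HD) (vnorm2_coord v QQ) mulr_sumr.
apply: ler_sum_cnorm2 => i vi; apply: cd; apply: contraNT vi => /vA ->; exact: eqxx.
Qed.

Lemma qformB m (M1 M2 : 'M[C]_m) v : qform (M2 - M1) v = qform M2 v - qform M1 v.
Proof. by rewrite /qform mulmxBr mulmxBl !mxE raddfB. Qed.

Lemma qform_scalar m (b : R) (v : 'cV[C]_m) : qform (rC b)%:M v = b * vnorm2 v.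
Proof.
rewrite /qform mul_mx_scalar -scalemxAl mxE vnorm2E.
by case: ((adjmx v *m v) 0 0) => x y; rewrite /rC /=; ring.
Qed.

Lemma loewner_qform m (M1 M2 : 'M[C]_m) v : loewner_le M1 M2 -> qform M1 v <= qform M2 v.
Proof.
rewrite -subr_ge0 -qformB /qform => /(_ v).
by case: ((adjmx v *m (M2 - M1) *m v) 0 0) => a b /andP[].
Qed.

Lemma selfadj_unitary_diag m (H : 'M[C]_m) : selfadj H -> exists Q d, unitary_diag H Q d.
Proof.
move=> Hh.
have /orthomx_spectralP HP : H \is normalmx by apply/normalmxP; rewrite -adjmxE Hh.
set P := spectralmx H in HP; set sp := spectral_diag H in HP.
have PP' : P *m adjmx P = 1%:M by rewrite adjmxE; apply/unitarymxP/spectral_unitarymx.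
have iP : invmx P = adjmx P by rewrite adjmxE invmx_unitary // spectral_unitarymx.
have P'P : adjmx P *m P = 1%:M by rewrite -iP mulVmx // spectral_unit.
have D : P *m H *m adjmx P = diag_mx sp.
  by rewrite HP iP !mulmxA PP' mul1mx -mulmxA PP' mulmx1.
have Dh : adjmx (diag_mx sp) = diag_mx sp by rewrite -D !adjmxM adjmxK Hh mulmxA.
have sp_real i : sp 0 i = rC (complex.Re (sp 0 i)).
  move/matrixP/(_ i i): Dh; rewrite !mxE eqxx /= mulr1n.
  by case: (sp 0 i) => a b /= [] b0; rewrite /rC (_ : b = 0) //; lra.
exists (adjmx P), (fun i => complex.Re (sp 0 i)); split; rewrite ?adjmxK //.
rewrite -iP {1}HP; congr (_ *m diag_mx _ *m _).
by apply/rowP => i; rewrite mxE -sp_real.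
Qed.

End Hermitian.

Section EigenvalueCounting.
Variable R : realType.
Local Notation C := (complex R).

Lemma rowsub_mulmxE m k (f : 'I_k -> 'I_m) (M : 'M[C]_m) (v : 'cV[C]_m) j :
  (rowsub f M *m v) j 0 = (M *m v) (f j) 0.
Proof. by rewrite !mxE; apply: eq_bigr => l _; rewrite !mxE. Qed.

Lemma kermx_nonzero p m (K : 'M[C]_(p, m)) : (\rank K < m)%N ->
  exists2 v : 'cV[C]_m, v != 0 & K *m v = 0.
Proof.
move=> rK; set X := kermx K^T.
have X0 : X != 0 by rewrite -mxrank_eq0 mxrank_ker mxrank_tr subn_eq0 -ltnNge.
have [i Xi] : exists i, row i X != 0.
  apply/existsP; apply: contraR X0 => /existsPn X0.
  by apply/eqP/row_matrixP => i; rewrite row0; apply/eqP/negbNE.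
have XK : row i X *m K^T = 0 by apply/sub_kermxP; exact: row_sub.
exists (row i X)^T; first by rewrite -trmx0 (inj_eq trmx_inj).
by rewrite -(trmxK K) -trmx_mul XK trmx0.
Qed.

Lemma common_null_vector m (M1 M2 : 'M[C]_m) (A1 A2 : {set 'I_m}) :
  (m < #|A1| + #|A2|)%N ->
  exists2 v : 'cV[C]_m, v != 0 &
    (forall i, i \notin A1 -> (M1 *m v) i 0 = 0) /\
    (forall i, i \notin A2 -> (M2 *m v) i 0 = 0).
Proof.
move=> A12; set K1 := rowsub (@enum_val _ (~: A1)) M1.
set K2 := rowsub (@enum_val _ (~: A2)) M2.
have c1 := cardsC A1; have c2 := cardsC A2; rewrite card_ord in c1 c2.
have rK : (\rank (col_mx K1 K2) < m)%N.
  apply: leq_ltn_trans (rank_leq_row _) _.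
  by have : (#|~: A1| + #|~: A2| < m)%N by lia.
have [v v0 Kv] := kermx_nonzero rK.
exists v => //; rewrite mul_col_mx in Kv; split => i iA.
- have iA' : i \in ~: A1 by rewrite inE.
  move/matrixP/(_ (lshift _ (enum_rank_in iA' i)) 0): Kv.
  by rewrite col_mxEu rowsub_mulmxE enum_rankK_in // => ->; rewrite mxE.
- have iA' : i \in ~: A2 by rewrite inE.
  move/matrixP/(_ (rshift _ (enum_rank_in iA' i)) 0): Kv.
  by rewrite col_mxEd rowsub_mulmxE enum_rankK_in // => ->; rewrite mxE.
Qed.

(* A nonzero vector orthogonal to the eigenvectors of [H1] below [-c] and to
   those of [H2] above [c] exists by counting dimensions. *)
Lemma eigen_shift_le m (H1 H2 Q1 Q2 : 'M[C]_m) d1 d2 (c del : R) (k : nat) :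
  unitary_diag H1 Q1 d1 -> unitary_diag H2 Q2 d2 ->
  (forall v, qform H1 v + del * vnorm2 v <= qform H2 v) ->
  (#|[set i | (d1 i < - c)%R]| < k)%N -> (k <= #|[set i | (d2 i <= c)%R]|)%N ->
  del <= 2 * c.
Proof.
move=> D1 D2 H12 k1 k2.
set B := [set i | (d1 i < - c)%R] in k1; set A2 := [set i | (d2 i <= c)%R] in k2.
have := cardsC B; rewrite card_ord => cB.
have [|v v0 [v1 v2]] := common_null_vector (adjmx Q1) (adjmx Q2)
  (_ : (m < #|~: B| + #|A2|)%N); first by lia.
have q1 : - c * vnorm2 v <= qform H1 v.
  by apply: (qform_ge_on D1 _ v1) => i; rewrite !inE -leNgt.
have q2 : qform H2 v <= c * vnorm2 v by apply: (qform_le_on D2 _ v2) => i; rewrite inE.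
have := vnorm2_gt0 v0; have := H12 v; nra.
Qed.

End EigenvalueCounting.

Local Open Scope classical_set_scope.

Section Monotonicity.
Variable R : realType.
Local Notation C := (complex R).

Definition derivable_family m (F : R -> 'M[C]_m) :=
  forall x i j, derivable (reF F i j) x 1 /\ derivable (imF F i j) x 1.

Lemma C1_family_derivable m (F : R -> 'M[C]_m) : C1_family F -> derivable_family F.
Proof. by move=> F1 x i j; have [? [_ [? _]]] := F1 i j. Qed.

Lemma qform_expand m (M : 'M[C]_m) (v : 'cV[C]_m) :
  qform M v = \sum_j \sum_i
    (complex.Re (conjc (v i 0) * v j 0) * complex.Re (M i j)
     - complex.Im (conjc (v i 0) * v j 0) * complex.Im (M i j)).
Proof.
rewrite /qform !mxE raddf_sum; apply: eq_bigr => j _.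
rewrite !mxE mulr_suml raddf_sum; apply: eq_bigr => i _; rewrite !mxE.
by case: (v i 0) => a b; case: (v j 0) => c d; case: (M i j) => e f /=; ring.
Qed.

Lemma is_derive_qform m (F : R -> 'M[C]_m) (v : 'cV[C]_m) (x : R) :
  derivable_family F -> is_derive x (1 : R) (fun t => qform (F t) v) (qform (deriv_mx F x) v).
Proof.
move=> Fd; set p := fun i j => conjc (v i 0) * v j 0.
have -> : (fun t => qform (F t) v) = \sum_j \sum_i
    (complex.Re (p i j) \*: reF F i j - complex.Im (p i j) \*: imF F i j).
  by apply/funext => t; rewrite qform_expand fct_sumE; apply: eq_bigr => j _;
    rewrite fct_sumE.
rewrite qform_expand; apply: is_derive_sum => j; apply: is_derive_sum => i.
rewrite !mxE /=; have [d1 d2] := Fd x i j.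
by apply: is_deriveB; apply: is_deriveZ; rewrite derive1E; exact: derivableP.
Qed.

Lemma derivable_family_mulmx m (F : R -> 'M[C]_m) (U : 'M[C]_m) :
  derivable_family F -> derivable_family (fun t => F t *m U).
Proof.
move=> Fd x i j.
have -> : reF (fun t => F t *m U) i j = \sum_l
    (complex.Re (U l j) \*: reF F i l - complex.Im (U l j) \*: imF F i l).
  apply/funext => t; rewrite fct_sumE /reF mxE raddf_sum; apply: eq_bigr => l _.
  transitivity (complex.Re (U l j) * complex.Re (F t i l)
                - complex.Im (U l j) * complex.Im (F t i l)); last by [].
  by case: (F t i l) => a b; case: (U l j) => c d /=; ring.
have -> : imF (fun t => F t *m U) i j = \sum_l
    (complex.Im (U l j) \*: reF F i l + complex.Re (U l j) \*: imF F i l).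
  apply/funext => t; rewrite fct_sumE /imF mxE raddf_sum; apply: eq_bigr => l _.
  transitivity (complex.Im (U l j) * complex.Re (F t i l)
                + complex.Re (U l j) * complex.Im (F t i l)); last by [].
  by case: (F t i l) => a b; case: (U l j) => c d /=; ring.
split; apply: derivable_sum => l; have [d1 d2] := Fd x i l.
  by apply: derivableB; apply: derivableZ.
by apply: derivableD; apply: derivableZ.
Qed.

Lemma qform_increment m (H : R -> 'M[C]_m) (b : R) (v : 'cV[C]_m) :
  derivable_family H -> (forall x, loewner_le (rC b)%:M (deriv_mx H x)) ->
  forall x y, x <= y -> qform (H x) v + b * (y - x) * vnorm2 v <= qform (H y) v.
Proof.
move=> Hd Hb x y xy.
have Hder (t : R) : is_derive t (1 : R) (fun t => qform (H t) v) (qform (deriv_mx H t) v).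
  exact: is_derive_qform.
have Hcont : {within `[x, y], continuous (fun t => qform (H t) v)}.
  apply: continuous_subspaceT => z; apply: differentiable_continuous.
  by apply/derivable1_diffP; exact: ex_derive.
have [c _ Hc] := MVT_segment xy (fun t _ => Hder t) Hcont.
have bc : b * vnorm2 v <= qform (deriv_mx H c) v.
  by rewrite -qform_scalar; exact: loewner_qform.
have : qform (H y) v - qform (H x) v = qform (deriv_mx H c) v * (y - x) by exact: Hc.
have : 0 <= y - x by lra.
nra.
Qed.

End Monotonicity.

Section LebesgueOuter.
Variable R : realType.

Lemma le_lebesgue_measure (A B : set R) :
  A `<=` B -> (lebesgue_measure A <= lebesgue_measure B)%E.
Proof.
by move=> AB; rewrite /lebesgue_measure /lebesgue_stieltjes_measure /measure_extension
  le_outer_measure.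
Qed.

Lemma lebesgue_measure_bigsetU_le (F : (set R)^nat) n :
  (lebesgue_measure (\big[setU/set0]_(i < n) F i)
    <= \sum_(i < n) lebesgue_measure (F i))%E.
Proof.
rewrite /lebesgue_measure /lebesgue_stieltjes_measure /measure_extension.
exact: outer_measure_subadditive.
Qed.

(* A set of diameter at most [d] lies in [[inf S, inf S + d]]. *)
Lemma lebesgue_measure_le_diameter (S : set R) (d : R) : 0 <= d ->
  (forall x y, S x -> S y -> x < y -> y - x <= d) ->
  (lebesgue_measure S <= d%:E)%E.
Proof.
move=> d0 Sd; have [->|/set0P[x0 Sx0]] := eqVneq S set0.
  by rewrite measure0 lee_fin.
have Slb : has_lbound S.
  exists (x0 - d) => y Sy; have [yx0|] := ltP y x0; last lra.
  by have := Sd _ _ Sy Sx0 yx0; lra.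
have sub : S `<=` [set` `[inf S, inf S + d]%R].
  move=> y Sy; rewrite /= in_itv /= ge_inf //=; rewrite leNgt; apply/negP => yd.
  have yd0 : 0 < y - d - inf S by lra.
  have [x Sx xS] := inf_adherent yd0 (conj (ex_intro _ _ Sy) Slb).
  by have := Sd _ _ Sx Sy (_ : x < y); lra.
apply: le_trans (le_lebesgue_measure sub) _.
rewrite lebesgue_measure_itv /=; case: ifP => _; last by rewrite lee_fin.
by rewrite -EFinD lee_fin; lra.
Qed.

End LebesgueOuter.

Section OperatorNorm.
Variable R : realType.
Local Notation C := (complex R).

Lemma opnorm_has_ubound m (M : 'M[C]_m) :
  has_ubound [set vnorm (M *m v) | v in [set v : 'cV[C]_m | vnorm v = 1]].
Proof.
have [|Q [d D]] := @selfadj_unitary_diag _ _ (adjmx M *m M).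
  by rewrite /selfadj adjmxM adjmxK.
exists (Num.sqrt (\sum_i `|d i|)) => _ [v /= v1 <-].
rewrite vnormE ler_sqrt; last by apply: sumr_ge0 => i _.
have -> : vnorm2 (M *m v) = qform (adjmx M *m M) v by rewrite vnorm2E /qform adjmxM !mulmxA.
rewrite -[leRHS]mulr1 -(vnorm_eq1 v1).
apply: (qform_le_on (A := [set: 'I_m]) D) => [i _|i]; last by rewrite inE.
by rewrite (le_trans (ler_norm _)) // (bigD1 i) //= lerDl sumr_ge0.
Qed.

Lemma opnorm_ub m (M : 'M[C]_m) (v : 'cV[C]_m) : vnorm v = 1 -> vnorm (M *m v) <= opnorm M.
Proof.
move=> v1; apply: sup_upper_bound; last by exists v.
by split; [exists (vnorm (M *m v)), v | exact: opnorm_has_ubound].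
Qed.

Lemma opnorm_ge0 m (M : 'M[C]_m) : 0 <= opnorm M.
Proof.
have [S0|/set0P[_ [v v1 _]]] :=
  eqVneq [set vnorm (M *m v) | v in [set v : 'cV[C]_m | vnorm v = 1]] set0.
  by rewrite /opnorm S0 sup0.
by apply: le_trans (opnorm_ub M v1); rewrite vnormE sqrtr_ge0.
Qed.

Lemma opnorm_le m (M : 'M[C]_m) (K : R) : 0 <= K ->
  (forall v, vnorm v = 1 -> vnorm (M *m v) <= K) -> opnorm M <= K.
Proof.
move=> K0 MK; rewrite /opnorm; set S := [set _ | _ in _].
have [->|/set0P S0] := eqVneq S set0; first by rewrite sup0.
by apply: ge_sup => // _ [v /= v1 <-]; exact: MK.
Qed.

Lemma opnorm_mulmx_le m (M : 'M[C]_m) (w : 'cV[C]_m) :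
  vnorm (M *m w) <= opnorm M * vnorm w.
Proof.
have [->|w0] := eqVneq w 0.
  by rewrite mulmx0 !vnormE (eqP (_ : vnorm2 (0 : 'cV[C]_m) == 0)) ?vnorm2_eq0 ?sqrtr0 ?mulr0.
set r := vnorm w; have r0 : 0 < r by rewrite /r vnormE sqrtr_gt0 vnorm2_gt0.
have u1 : vnorm (rC r^-1 *: w) = 1.
  rewrite vnormE vnorm2Z -[vnorm2 w](sqr_sqrtr (vnorm2_ge0 w)) -vnormE -/r.
  by rewrite -exprMn mulVf ?gt_eqF // expr1n sqrtr1.
have := opnorm_ub M u1.
rewrite -scalemxAr !vnormE vnorm2Z sqrtrM ?sqr_ge0 // sqrtr_sqr ger0_norm; last first.
  by rewrite invr_ge0 ltW.
by rewrite -vnormE -/r ler_pdivrMl // mulrC.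
Qed.

Lemma opnorm_mulmx_diag_le m (M H Q : 'M[C]_m) d (K : R) :
  unitary_diag H Q d -> 0 <= K -> (forall i, `|d i| <= K) ->
  opnorm (M *m H) <= opnorm M * K.
Proof.
move=> D K0 dK; apply: opnorm_le => [|v v1]; first by rewrite mulr_ge0 ?opnorm_ge0.
rewrite -mulmxA; apply: le_trans (opnorm_mulmx_le _ _) _.
rewrite ler_wpM2l ?opnorm_ge0 // vnormE -(ger0_norm K0) -sqrtr_sqr ler_sqrt ?sqr_ge0 //.
rewrite -[leRHS]mulr1 -(vnorm_eq1 v1); apply: (vnorm2_mul_le _ D) => i.
by rewrite -real_normK ?num_real // ler_sqr ?normr_ge0 ?dK.
Qed.

Lemma unitary_diag_inv m (H Q : 'M[C]_m) d : unitary_diag H Q d -> (forall i, d i != 0) ->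
  H \in unitmx /\ unitary_diag (invmx H) Q (fun i => (d i)^-1).
Proof.
move=> [QQ' Q'Q ->] d0; set G := Q *m diag_mx (\row_i rC (d i)^-1) *m adjmx Q.
have DD : diag_mx (\row_i rC (d i)) *m diag_mx (\row_i rC (d i)^-1) = 1%:M.
  apply/matrixP => i j; rewrite mul_diag_mx !mxE.
  by have [->|] := eqVneq i j; rewrite ?mulr0 // !mulr1n rCM mulfV.
have HG : Q *m diag_mx (\row_i rC (d i)) *m adjmx Q *m G = 1%:M.
  by rewrite /G !mulmxA -(mulmxA _ (adjmx Q) Q) QQ' mulmx1 -(mulmxA Q) DD mulmx1 Q'Q.
have [Hu _] := mulmx1_unit HG; split => //; split => //.
by rewrite -[invmx _]mulmx1 -HG mulmxA mulVmx // mul1mx.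
Qed.

(* [A^-1 = U (A U)^-1], and [(A U)^-1] has eigenvalues [1 / d i]. *)
Lemma opnorm_invmx_le m (A U Q : 'M[C]_m) d (c : R) :
  unitary_diag (A *m U) Q d -> 0 < c -> (forall i, c <= `|d i|) ->
  A \in unitmx /\ opnorm (invmx A) <= opnorm U / c.
Proof.
move=> D c0 dc.
have d0 i : d i != 0 by rewrite -normr_gt0 (lt_le_trans c0).
have [AUu Dinv] := unitary_diag_inv D d0.
have AV : A *m (U *m invmx (A *m U)) = 1%:M by rewrite mulmxA mulmxV.
have [Au _] := mulmx1_unit AV; split => //.
have -> : invmx A = U *m invmx (A *m U).
  by rewrite -[invmx A]mulmx1 -AV !mulmxA mulVmx // mul1mx.
apply: opnorm_mulmx_diag_le Dinv _ _; first by rewrite invr_ge0 ltW.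
by move=> i; rewrite normfV lef_pV2 ?posrE ?normr_gt0 ?d0.
Qed.

End OperatorNorm.

Section GeneralBound.
Variable R : realType.
Local Notation C := (complex R).

Definition eigen_level m (H : R -> 'M[C]_m) (c : R) (k : nat) : set R :=
  [set xi | exists Q d, unitary_diag (H xi) Q d /\
    (#|[set i | (d i < - c)%R]%SET| < k <= #|[set i | (d i <= c)%R]%SET|)%N].

Lemma eigen_level_measure_le m (H : R -> 'M[C]_m) (b c : R) k :
  derivable_family H -> (forall x, loewner_le (rC b)%:M (deriv_mx H x)) ->
  0 < b -> 0 <= c -> (lebesgue_measure (eigen_level H c k) <= (2 * c / b)%:E)%E.
Proof.
move=> Hd Hb b0 c0; apply: lebesgue_measure_le_diameter.
  by rewrite divr_ge0 ?mulr_ge0 // ltW.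
move=> x y [Q1 [d1 [D1 /andP[k1 _]]]] [Q2 [d2 [D2 /andP[_ k2]]]] xy.
rewrite ler_pdivlMr // mulrC.
apply: (eigen_shift_le D1 D2 _ k1 k2) => v.
exact: qform_increment Hd Hb _ _ (ltW xy).
Qed.

Lemma bad_set_small_eigen n (A : R -> 'M[C]_n) (U Q : 'M[C]_n) d alpha xi :
  0 < alpha -> unitary_diag (A xi *m U) Q d -> bad_set A alpha xi ->
  exists i, `|d i| <= alpha * opnorm U.
Proof.
move=> a0 D; apply: contraPP => /forallNP dc.
have {}dc i : alpha * opnorm U < `|d i| by rewrite ltNge; apply/negP/dc.
set m0 := \big[Num.min/(alpha * opnorm U + 1)]_i `|d i|.
have cm0 : alpha * opnorm U < m0.
  rewrite /m0; elim/big_ind: _ => // [|x y cx cy]; first lra.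
  by rewrite lt_min cx cy.
have m0d i : m0 <= `|d i| by rewrite /m0 (bigD1 i) //= ge_min lexx.
have m00 : 0 < m0 by apply: le_lt_trans cm0; rewrite mulr_ge0 ?opnorm_ge0 // ltW.
have [Au invA] := opnorm_invmx_le D m00 m0d.
rewrite /bad_set /= /opnorm_inv Au lee_fin => /le_trans/(_ invA).
rewrite ler_pdivlMr // => /(ler_wpM2l (ltW a0)).
by rewrite mulrA mulfV ?gt_eqF // mul1r; lra.
Qed.

Lemma bad_set_sub_eigen_levels n (A : R -> 'M[C]_n) (U : 'M[C]_n) alpha :
  (forall xi, selfadj (A xi *m U)) -> 0 < alpha ->
  bad_set A alpha `<=`
    \big[setU/set0]_(k < n) eigen_level (fun t => A t *m U) (alpha * opnorm U) k.+1.
Proof.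
move=> Hsa a0 xi bad; set c := alpha * opnorm U.
have [Q [d D]] := selfadj_unitary_diag (Hsa xi).
have [i0] := bad_set_small_eigen a0 D bad; rewrite -/c ler_norml => /andP[ci0 i0c].
set k := #|[set i | (d i <= c)%R]%SET|.
have k0 : (0 < k)%N by apply/card_gt0P; exists i0; rewrite inE.
have kn : (k <= n)%N by rewrite -[n]card_ord max_card.
have kk : (#|[set i | (d i < - c)%R]%SET| < k)%N.
  apply/proper_card/properP; split.
    by apply/fintype.subsetP => i; rewrite !inE => /ltW/le_trans; apply; lra.
  by exists i0; rewrite !inE // -leNgt.
have kn1 : (k.-1 < n)%N by lia.
apply: (@bigsetU_sup _ k.-1 n (fun j => eigen_level (fun t => A t *m U) c j.+1) kn1 xi).
by rewrite /eigen_level /= prednK //; exists Q, d; split => //; apply/andP.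
Qed.

Lemma bad_set_measure_le n (A : R -> 'M[C]_n) (U : 'M[C]_n) (beta alpha : R) :
  C1_family A -> (forall xi, selfadj (A xi *m U)) -> 0 < beta ->
  (forall xi, loewner_le (rC beta)%:M (deriv_mx (fun t => A t *m U) xi)) ->
  0 < alpha ->
  (lebesgue_measure (bad_set A alpha) <= (2 * n%:R * alpha / beta * opnorm U)%:E)%E.
Proof.
move=> A1 Hsa b0 Hb a0; set c := alpha * opnorm U.
have Hd := derivable_family_mulmx U (C1_family_derivable A1).
have c0 : 0 <= c by rewrite mulr_ge0 ?opnorm_ge0 // ltW.
apply: le_trans (le_lebesgue_measure (bad_set_sub_eigen_levels Hsa a0)) _.
apply: le_trans
  (lebesgue_measure_bigsetU_le (fun k => eigen_level (fun t => A t *m U) c k.+1) n) _.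
apply: (@le_trans _ _ (\sum_(k < n) (2 * c / beta)%:E)%E).
  by apply: lee_sum => k _; exact: eigen_level_measure_le.
rewrite sumEFin lee_fin sumr_const card_ord -mulr_natr /c le_eqVlt; apply/orP; left.
by apply/eqP; field; rewrite gt_eqF.
Qed.

End GeneralBound.

Section AffineFamily.
Variable R : realType.
Local Notation C := (complex R).

Lemma is_derive_affine (a b x : R) : is_derive x (1 : R) (fun t : R => a + t * b) b.
Proof.
have -> : (fun t : R => a + t * b) = cst a + b \*: (@id R).
  by apply/funext => t /=; rewrite mulrC.
by apply: is_derive_eq; rewrite add0r /GRing.scale /= mulr1.
Qed.

Lemma derivable_affine (a b x : R) : derivable (fun t : R => a + t * b) x 1.
Proof. by apply: ex_derive; exact: is_derive_affine. Qed.

Lemma reF_affine m (M0 M1 : 'M[C]_m) i j :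
  reF (fun t => M0 + rC t *: M1) i j =
  (fun t => complex.Re (M0 i j) + t * complex.Re (M1 i j)).
Proof.
by apply/funext => t; rewrite /reF !mxE; case: (M0 i j) => a b; case: (M1 i j) => c d /=; ring.
Qed.

Lemma imF_affine m (M0 M1 : 'M[C]_m) i j :
  imF (fun t => M0 + rC t *: M1) i j =
  (fun t => complex.Im (M0 i j) + t * complex.Im (M1 i j)).
Proof.
by apply/funext => t; rewrite /imF !mxE; case: (M0 i j) => a b; case: (M1 i j) => c d /=; ring.
Qed.

Lemma derive1_affine (a b : R) : (fun t : R => a + t * b)^`() = cst b.
Proof. by apply/funext => x; rewrite derive1E (@derive_val _ _ _ _ _ _ _ (is_derive_affine a b x)). Qed.

Lemma C1_family_affine m (M0 M1 : 'M[C]_m) : C1_family (fun t => M0 + rC t *: M1).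
Proof.
move=> i j; rewrite reF_affine imF_affine !derive1_affine.
by split; [|split; [|split]]; apply: derivable_affine || apply: cst_continuous.
Qed.

Lemma deriv_mx_affine m (M0 M1 : 'M[C]_m) x :
  deriv_mx (fun t => M0 + rC t *: M1) x = M1.
Proof.
apply/matrixP => i j; rewrite mxE reF_affine imF_affine !derive1_affine.
by case: (M1 i j).
Qed.

Lemma unitary_diag_loewner m (Z Q : 'M[C]_m) d (b1 b2 : R) : unitary_diag Z Q d ->
  loewner_le (rC b1)%:M Z -> loewner_le Z (rC b2)%:M -> forall i, b1 <= d i <= b2.
Proof.
move=> D Z1 Z2 i; have [Q'Q QQ' _] := D.
set v := Q *m (delta_mx i 0 : 'cV[C]_m).
have Qv : adjmx Q *m v = delta_mx i 0 by rewrite /v mulmxA Q'Q mul1mx.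
have coord j : cnorm2 ((adjmx Q *m v) j 0) = (j == i)%:R.
  rewrite Qv mxE eqxx andbT; case: (j == i); rewrite /cnorm2 /=; lra.
have qv : qform Z v = d i.
  rewrite (qform_unitary_diag v D) (bigD1 i) //= big1 => [|j ji].
    by rewrite coord eqxx mulr1 addr0.
  by rewrite coord (negbTE ji) mulr0.
have nv : vnorm2 v = 1.
  rewrite (vnorm2_coord v QQ') (bigD1 i) //= big1 => [|j ji]; first by rewrite coord eqxx addr0.
  by rewrite coord (negbTE ji).
move: (loewner_qform v Z1) (loewner_qform v Z2).
by rewrite !qform_scalar qv nv !mulr1 => -> ->.
Qed.

Lemma affine_bad_set_measure_le n (Z W : 'M[C]_n) (beta1 beta2 alpha : R) :
  selfadj Z -> selfadj W -> W \in unitmx -> 0 < beta1 ->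
  loewner_le (rC beta1)%:M Z -> loewner_le Z (rC beta2)%:M -> 0 < alpha ->
  (lebesgue_measure (bad_set (fun xi : R => (Z + (rC xi)%:M *m W)%R) alpha)
    <= (2 * n%:R * alpha * beta2 / beta1 * opnorm (invmx W))%:E)%E.
Proof.
move=> Zsa Wsa Wu b10 Z1 Z2 a0.
have [Q [d D]] := selfadj_unitary_diag Zsa.
have dZ := unitary_diag_loewner D Z1 Z2.
have d0 i : d i != 0 by have /andP[b1d _] := dZ i; rewrite gt_eqF // (lt_le_trans b10).
have [Zu _] := unitary_diag_inv D d0.
have adjiW : adjmx (invmx W) = invmx W.
  rewrite -[LHS]mulmx1 -(mulmxV Wu) mulmxA -[W in _ *m W *m _]Wsa -adjmxM.
  by rewrite mulmxV // adjmx1 mul1mx.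
set U := invmx W *m Z.
have AU t : (Z + rC t *: W) *m U = Z *m U + rC t *: Z.
  by rewrite mulmxDl -scalemxAl /U (mulmxA W) mulmxV ?mul1mx.
have -> : (fun xi => (Z + (rC xi)%:M *m W)%R) = fun t => Z + rC t *: W.
  by apply/funext => t; rewrite mul_scalar_mx.
apply: le_trans (bad_set_measure_le (U := U) (C1_family_affine _ _) _ b10 _ a0) _.
- move=> xi; rewrite /selfadj AU adjmxD adjmxZ_real /U !adjmxM adjiW Zsa mulmxA.
  by [].
- by move=> xi; rewrite (funext AU) deriv_mx_affine.
rewrite lee_fin; have [n0|n0] := posnP n.
  by rewrite (_ : n%:R = 0) ?mulr0 ?mul0r // n0.
have b20 : 0 <= beta2 by have /andP[? ?] := dZ (Ordinal n0); lra.
have UZ : opnorm U <= opnorm (invmx W) * beta2.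
  by apply: opnorm_mulmx_diag_le D b20 _ => i; have /andP[? ?] := dZ i; rewrite ger0_norm; lra.
rewrite [leRHS](_ : _ = 2 * n%:R * alpha / beta1 * (opnorm (invmx W) * beta2)).
  by rewrite ler_wpM2l // divr_ge0 ?mulr_ge0 // ltW.
by field; rewrite gt_eqF.
Qed.

End AffineFamily.

Local Close Scope classical_set_scope.

Theorem lemma6p2 (R : realType) (n : nat) :
  (* (i) *)
  (forall (A : R -> 'M[complex R]_n) (U : 'M[complex R]_n) (beta : R),
     C1_family A ->
     U \in unitmx ->
     (forall xi, selfadj (A xi *m U)) ->
     0 < beta ->
     (forall xi, loewner_le (rC beta)%:M (deriv_mx (fun t => A t *m U) xi)) ->
     forall alpha : R, 0 < alpha ->
       (lebesgue_measure (bad_set A alpha)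
         <= (2 * n%:R * alpha / beta * opnorm U)%:E)%E)
  /\
  (* (ii) *)
  (forall (Z W : 'M[complex R]_n) (beta1 beta2 : R),
     selfadj Z -> selfadj W -> W \in unitmx ->
     0 < beta1 ->
     loewner_le (rC beta1)%:M Z -> loewner_le Z (rC beta2)%:M ->
     forall alpha : R, 0 < alpha ->
       (lebesgue_measure (bad_set (fun xi : R => (Z + (rC xi)%:M *m W)%R) alpha)
         <= (2 * n%:R * alpha * beta2 / beta1 * opnorm (invmx W))%:E)%E).
Proof.
split.
-
  move=> A U beta A1 _ Hsa b0 Hb alpha a0.
  exact: bad_set_measure_le.
- move=> Z W beta1 beta2 Zsa Wsa Wu b10 Z1 Z2 alpha a0.
  exact: affine_bad_set_measure_le.
Qed.
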